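(* In the setting below, the asymmetric product $T\rtimes_\circ S$ is a simple left brace if and only if $f_z-\mathrm{id}$ is bijective on $V_z$ for every $z\in\mathbb{Z}/(n)$.
   Context: A left brace is a set $B$ with two operations $+,\cdot$ such that $(B,+)$ is an abelian group, $(B,\cdot)$ is a group and $a(b+c)+a=ab+ac$ for all $a,b,c$; $\lambda_a(b)=ab-a$. A left ideal is a subgroup $L$ of $(B,+)$ with $\lambda_b(L)\subseteq L$ for all $b$; an ideal is a left ideal that is a normal subgroup of $(B,\cdot)$; $B$ is simple if $B\neq0$ and its only ideals are $0$ and $B$. For a symmetric bi-additive map $\beta\colon X\times X\to Y$, $\mathrm{O}(X,\beta)=\{g\in\mathrm{Aut}(X,+):\beta(g(x),g(y))=\beta(x,y)\ \forall x,y\}$. Setting: $n>1$, indices $z$ range over $\mathbb{Z}/(n)$. For each $z$, $p_z$ is a prime ($p_z\ne p_{z'}$ for $z\ne z'$), $r_z$ is a positive integer, $m_z$ is an integer with $m_z\ge\max\{r_z,r_{z-1}\}$, $V_z$ is a finite-dimensional $\mathbb{Z}/(p_z)$-vector space with a non-singular symmetric bilinear form $b_z$, and $f_z\in\mathrm{O}(V_z,b_z)$ has order $p_{z-1}$. Let $T_z=V_z^{m_z}$, $S_z=(\mathbb{Z}/(p_z))^{r_z}$ with standard basis $e^{(z)}_1,\dots,e^{(z)}_{r_z}$. Define $b'_z\colon T_z\times T_z\to S_z$ by $b'_z((u_j),(v_j))=\sum_{i=1}^{r_z-1}b_z(u_i,v_i)e^{(z)}_i+\big(\sum_{j=1}^{m_z}b_z(u_j,v_j)\big)e^{(z)}_{r_z}$.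 With $r=r_{z-1}$ and $s=\sum_{i=1}^r\mu_ie^{(z-1)}_i\in S_{z-1}$, define $f^{(z-1,z)}_s(u_1,\dots,u_{m_z})=(f_z^{\mu_1+\mu_r}(u_1),\dots,f_z^{\mu_{r-1}+\mu_r}(u_{r-1}),f_z^{\mu_r}(u_r),\dots,f_z^{\mu_r}(u_{m_z}))$ (all components $f_z^{\mu_1}(u_j)$ if $r=1$). Let $T=T_1\times\cdots\times T_n$, $S=S_1\times\cdots\times S_n$, $b\colon T\times T\to S$, $b(t,t')=(b'_1(t_1,t'_1),\dots,b'_n(t_n,t'_n))$, and $\alpha_{(s_1,\dots,s_n)}(t_1,\dots,t_n)=(f^{(n,1)}_{s_n}(t_1),f^{(1,2)}_{s_1}(t_2),\dots,f^{(n-1,n)}_{s_{n-1}}(t_n))$. The asymmetric product $T\rtimes_\circ S$ is the set $T\times S$ with $(t,s)+(t',s')=(t+t',s+s'+b(t,t'))$ and $(t,s)\cdot(t',s')=(t+\alpha_s(t'),s+s')$; it is a left brace. *)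

From HB Require Import structures.
From mathcomp Require Import all_boot all_order all_algebra all_fingroup.
Set Implicit Arguments. Unset Strict Implicit. Unset Printing Implicit Defensive.
Import GRing.Theory.
Local Open Scope ring_scope.

Section BraceNotions.
Variables (B : Type) (add : B -> B -> B) (zero : B) (mul : B -> B -> B) (one : B).

(* lambda_a(b) = ab - a, i.e. the unique c with a + c = ab *)
Definition brace_lambda_rel (a x c : B) : Prop := add a c = mul a x.

Definition add_subgroup (L : B -> Prop) : Prop :=
  [/\ L zero,
      (forall x y, L x -> L y -> L (add x y)) &
      (forall x y, L x -> add x y = zero -> L y)].

Definition left_ideal (L : B -> Prop) : Prop :=
  add_subgroup L /\ (forall b x c, L x -> brace_lambda_rel b x c -> L c).

Definition normal_mul_subgroup (L : B -> Prop) : Prop :=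
  [/\ L one,
      (forall x y, L x -> L y -> L (mul x y)),
      (forall x y, L x -> mul x y = one -> L y) &
      (forall b c x, mul b c = one -> L x -> L (mul (mul b x) c))].

Definition brace_ideal (L : B -> Prop) : Prop := left_ideal L /\ normal_mul_subgroup L.

Definition simple_brace : Prop :=
  (exists x, x <> zero) /\
  forall L, brace_ideal L -> (forall x, L x <-> x = zero) \/ (forall x, L x).
End BraceNotions.

Definition map_order (T : Type) (g : T -> T) (k : nat) : Prop :=
  (0 < k)%N /\ (forall x, iter k g x = x) /\
  (forall j, (0 < j < k)%N -> exists x, iter j g x <> x).

(* 0-based coordinate i of a row vector (0 if out of range) *)
Definition rcoef (R : nzRingType) k (s : 'rV[R]_k) (i : nat) : R :=
  oapp (fun j : 'I_k => s 0 j) 0 (insub i).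

(* 0-based row i of a matrix (0 if out of range) *)
Definition mrow (R : nzRingType) m d (t : 'M[R]_(m, d)) (i : nat) : 'rV[R]_d :=
  oapp (fun j : 'I_m => row j t) 0 (insub i).

Section Asym.
Variables (n : nat) (p r m d : 'I_n -> nat).
Local Notation F z := ('F_(p z)).
Local Notation V z := ('rV[F z]_(d z)).
(* T_z = V_z^{m_z}: the j-th row of a matrix is u_{j+1} *)
Local Notation Tz z := ('M[F z]_(m z, d z)).
(* S_z = (Z/p_z)^{r_z}: coordinate i is the coefficient of e_{i+1} *)
Local Notation Sz z := ('rV[F z]_(r z)).
Variables (b : forall z, V z -> V z -> F z) (f : forall z, V z -> V z).

Definition bprime (z : 'I_n) (u v : Tz z) : Sz z :=
  \row_(i < r z)
    (if (i < (r z).-1)%N then b (mrow u i) (mrow v i)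
     else \sum_(j < m z) b (row j u) (row j v)).

Definition fshift (z : 'I_n) (s : Sz (ord_pred z)) (t : Tz z) : Tz z :=
  let rl := (r (ord_pred z)).-1 in
  \matrix_(j < m z)
    iter (nat_of_ord (if (j < rl)%N then rcoef s j + rcoef s rl else rcoef s rl))
         (f (z:=z)) (row j t).

Definition AsymT := ((forall z, Tz z) * (forall z, Sz z))%type.

Definition asym_add (x y : AsymT) : AsymT :=
  (fun z => x.1 z + y.1 z, fun z => x.2 z + y.2 z + bprime (x.1 z) (y.1 z)).

Definition asym_mul (x y : AsymT) : AsymT :=
  (fun z => x.1 z + fshift (x.2 (ord_pred z)) (y.1 z), fun z => x.2 z + y.2 z).

Definition asym_zero : AsymT := (fun z => 0, fun z => 0).
End Asym.

From mathcomp Require Import all_boot all_order all_algebra all_fingroup.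
From mathcomp Require Import zify ring.
From Stdlib Require Import FunctionalExtensionality Classical.
Set Implicit Arguments. Unset Strict Implicit. Unset Printing Implicit Defensive.
Import GRing.Theory.
Local Open Scope ring_scope.

(* Write z+1 for ordS z.  If f_z - id is bijective for all z, let I be a
   nonzero ideal.  Using the maps lambda, conjugation by (x, 0) and the
   pairing b', I contains an element (0, s) supported in one slot S_z whose
   alpha-action on T_{z+1} is f_{z+1} on every row but possibly one; since
   f_{z+1} - id is onto, this yields every (M, 0) with M supported on a
   suitable row of T_{z+1}, then (pairing two such rows) an (0, s') acting by
   f_{z+1} on all rows, hence all of T_{z+2}; going around the cycle gives
   every T_w, then every S_w because b'_w is onto, hence I = B.
   Conversely, the elements whose T_z-rows all lie in the image of f_z - id
   form an ideal containing the nonzero element (0, 1), so by simplicity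
   f_z - id is onto, hence bijective on the finite space V_z. *)

Section AdditiveMaps.
Variables (U V : zmodType) (g : U -> V).
Hypothesis g_add : {morph g : u v / u + v}.

Lemma addf0 : g 0 = 0.
Proof. by apply: (addrI (g 0)); rewrite -g_add !addr0. Qed.

Lemma addfN u : g (- u) = - g u.
Proof. by apply/eqP; rewrite -subr_eq0 opprK -g_add addNr addf0. Qed.

End AdditiveMaps.

Lemma iter_morph_add (V : zmodType) (f : V -> V) :
  {morph f : u v / u + v} -> forall k, {morph iter k f : u v / u + v}.
Proof. by move=> f_add; elim=> // k IH u v /=; rewrite IH f_add. Qed.

Section SymmetricForm.
Variables (F : fieldType) (k : nat) (b : 'rV[F]_k -> 'rV[F]_k -> F).
Hypothesis b_lin : forall a u v w, b (a *: u + v) w = a * b u w + b v w.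

Lemma formDl w : {morph b ^~ w : u v / u + v}.
Proof. by move=> u v; have := b_lin 1 u v w; rewrite scale1r mul1r. Qed.

Lemma formZl a u w : b (a *: u) w = a * b u w.
Proof. by have := b_lin a u 0 w; rewrite addr0 (addf0 (formDl w)) addr0. Qed.

Hypothesis b_sym : forall u v, b u v = b v u.
Hypothesis b_nondeg : forall u, (forall v, b u v = 0) -> u = 0.

Lemma form_dual u : u != 0 -> exists w, b w u = 1.
Proof.
move=> u_neq0; have [v buv] : exists v, b u v != 0.
  apply: NNPP => no_v; move/eqP: u_neq0; apply; apply: b_nondeg => v.
  by apply/eqP; apply: contra_notT no_v => buv; exists v.
by exists ((b u v)^-1 *: v); rewrite formZl [b v u]b_sym mulVf.
Qed.

End SymmetricForm.

Section MapOrder.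
Variables (T : Type) (g : T -> T) (q : nat).
Hypothesis g_order : map_order g q.

Lemma iter_order_mul k x : iter (k * q) g x = x.
Proof. by elim: k => //= k IH; rewrite mulSn iterD IH; case: g_order => _ []. Qed.

Lemma iter_order_mod k x : iter (k %% q) g x = iter k g x.
Proof. by rewrite {2}(divn_eq k q) addnC iterD iter_order_mul. Qed.

Lemma iter_order_Fp_add (a c : 'F_q) x :
  prime q -> iter (a + c)%R g x = iter a g (iter c g x).
Proof.
move=> q_prime; have -> : nat_of_ord (a + c)%R = ((a + c) %% q)%N.
  by rewrite /=; congr (_ %% _)%N; exact: Fp_cast.
by rewrite iter_order_mod iterD.
Qed.

Lemma map_order_moved : (1 < q)%N -> exists x, g x <> x.
Proof. by move=> q_gt1; case: g_order => _ [_ /(_ 1%N)]; apply; rewrite q_gt1. Qed.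

End MapOrder.

Definition range_subid (V : zmodType) (f : V -> V) (v : V) : Prop :=
  exists u, f u - u = v.

Section RangeSubId.
Variables (V : zmodType) (f : V -> V) (q : nat).
Hypothesis f_add : {morph f : u v / u + v}.
Hypothesis f_order : map_order f q.
Local Notation R := (range_subid f).

Lemma range_subid0 : R 0.
Proof. by exists 0; rewrite (addf0 f_add) subr0. Qed.

Lemma range_subidD a c : R a -> R c -> R (a + c).
Proof. by move=> [u <-] [v <-]; exists (u + v); rewrite f_add opprD addrACA. Qed.

Lemma range_subidN a : R a -> R (- a).
Proof. by move=> [u <-]; exists (- u); rewrite (addfN f_add) opprB opprK addrC. Qed.

Lemma range_subid_iter k a : R a -> R (iter k f a).
Proof.
move=> Ra; elim: k => //= k [u <-].
by exists (f u); rewrite f_add (addfN f_add).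
Qed.

Lemma range_subid_iterV k a : R (iter k f a) -> R a.
Proof.
move=> /(range_subid_iter (k * q.-1)); rewrite -iterD -mulnSr prednK.
  by rewrite (iter_order_mul f_order).
by case: f_order.
Qed.

Lemma range_subid_iter_sub k w : R (iter k f w - w).
Proof.
elim: k => [|k IH] /=; first by rewrite subrr; exact: range_subid0.
have -> : f (iter k f w) - w = (f (iter k f w) - iter k f w) + (iter k f w - w).
  by rewrite addrA subrK.
by apply: range_subidD IH; exists (iter k f w).
Qed.

End RangeSubId.

Lemma surj_bij (T : finType) (h : T -> T) :
  (forall y, exists x, h x = y) -> bijective h.
Proof.
move=> h_surj; have h_surjb y : exists x, h x == y.
  by have [x <-] := h_surj y; exists x.
pose g y := xchoose (h_surjb y).
have gK : cancel g h by move=> y; exact/eqP/(xchooseP (h_surjb y)).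
have [g' gg' g'g] := injF_bij (can_inj gK).
exists g => // x; have -> : h x = g' x by rewrite -{1}(g'g x) gK.
exact: g'g.
Qed.

Lemma ordS_ind n (P : 'I_n -> Prop) (z0 : 'I_n) :
  P z0 -> (forall w, P w -> P (ordS w)) -> forall w, P w.
Proof.
move=> P0 PS w; have iter_ordS k : nat_of_ord (iter k (@ordS n) z0) = ((z0 + k) %% n)%N.
  elim: k => [|k IH] /=; first by rewrite addn0 modn_small.
  by rewrite IH -addn1 modnDml addn1 addnS.
have -> : w = iter (n - z0 + w) (@ordS n) z0.
  apply: ord_inj; rewrite iter_ordS addnA subnKC ?(ltnW (ltn_ord z0)) //.
  by rewrite modnDl modn_small.
by elim: (n - z0 + w)%N => //= k; apply: PS.
Qed.

Section Coordinates.
Variable R : nzRingType.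

Lemma rcoefD k (s s' : 'rV[R]_k) i : rcoef (s + s') i = rcoef s i + rcoef s' i.
Proof. by rewrite /rcoef; case: insubP => [j _ _|_] /=; rewrite ?mxE ?addr0. Qed.

Lemma rcoef0 k i : rcoef (0 : 'rV[R]_k) i = 0.
Proof. by rewrite /rcoef; case: insubP => [j _ _|_] /=; rewrite ?mxE. Qed.

Lemma rcoef_ord k (s : 'rV[R]_k) (j : 'I_k) : rcoef s j = s 0 j.
Proof. by rewrite /rcoef valK. Qed.

Lemma mrowD k c (s s' : 'M[R]_(k, c)) i : mrow (s + s') i = mrow s i + mrow s' i.
Proof. by rewrite /mrow; case: insubP => [j _ _|_] /=; rewrite ?linearD ?addr0. Qed.

Lemma mrow_ord k c (s : 'M[R]_(k, c)) (j : 'I_k) : mrow s j = row j s.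
Proof. by rewrite /mrow valK. Qed.

Definition row_single k c (k0 : 'I_k) (v : 'rV[R]_c) : 'M[R]_(k, c) :=
  \matrix_i (if i == k0 then v else 0).

Lemma row_row_single k c (k0 : 'I_k) (v : 'rV[R]_c) i :
  row i (row_single k0 v) = if i == k0 then v else 0.
Proof. exact: rowK. Qed.

Lemma mrow_row_single k c (k0 : 'I_k) (v : 'rV[R]_c) (i : nat) :
  i != k0 -> mrow (row_single k0 v) i = 0.
Proof.
move=> i_neq; rewrite /mrow; case: insubP => [j _ ij|] //=.
by rewrite row_row_single; case: eqP => // jk0; move: i_neq; rewrite -ij jk0 eqxx.
Qed.

End Coordinates.

Section AsymmetricProduct.
(* Declared with explicit arguments, so that [b z] and [f z] read as in the statement. *)
Local Unset Implicit Arguments.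
Variables (n : nat) (p r m d : 'I_n -> nat).
Hypothesis p_prime : forall z, prime (p z).
Hypothesis r_gt0 : forall z, (0 < r z)%N.
Hypothesis m_ge : forall z, (maxn (r z) (r (ord_pred z)) <= m z)%N.
Variable b : forall z, 'rV['F_(p z)]_(d z) -> 'rV['F_(p z)]_(d z) -> 'F_(p z).
Hypothesis b_lin : forall z a u v w, b z (a *: u + v) w = a * b z u w + b z v w.
Hypothesis b_sym : forall z u v, b z u v = b z v u.
Hypothesis b_nondeg : forall z u, (forall v, b z u v = 0) -> u = 0.
Variable f : forall z, 'rV['F_(p z)]_(d z) -> 'rV['F_(p z)]_(d z).
Hypothesis f_add : forall z, {morph f z : u v / u + v}.
Hypothesis f_order : forall z, map_order (f z) (p (ord_pred z)).
Local Set Implicit Arguments.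

Local Notation V z := 'rV['F_(p z)]_(d z).
Local Notation Tz z := 'M['F_(p z)]_(m z, d z).
Local Notation Sz z := 'rV['F_(p z)]_(r z).
Local Notation B := (AsymT p r m d).
Local Notation add := (@asym_add n p r m d b).
Local Notation mul := (@asym_mul n p r m d f).
Local Notation zero := (asym_zero p r m d).
Local Notation fsh z := (@fshift n p r m d f z).
Local Notation bp z := (@bprime n p r m d b z).
Local Notation tzero := (fun z => 0 : Tz z).
Local Notation szero := (fun z => 0 : Sz z).
Local Notation tsingle M := (dfwith tzero M).
Local Notation ssingle s := (dfwith szero s).

Lemma r_last_lt_m z : ((r z).-1 < m z)%N.
Proof. by move: (r_gt0 z) (m_ge z); lia. Qed.

Lemma r_pred_le_m z : (r (ord_pred z) <= m z)%N.
Proof. by move: (m_ge z); rewrite geq_max => /andP []. Qed.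

Lemma asym_ext (x y : B) :
  (forall z, x.1 z = y.1 z) -> (forall z, x.2 z = y.2 z) -> x = y.
Proof.
by case: x y => [x1 x2] [y1 y2] /= e1 e2; congr pair; exact: functional_extensionality_dep.
Qed.

Lemma b0l z w : b z 0 w = 0.
Proof. exact: addf0 (formDl (b_lin z) w). Qed.

Lemma vector_nonzero z : exists v : V z, v != 0.
Proof.
have [v fv] := map_order_moved (f_order z) (prime_gt1 (p_prime _)).
by exists v; apply: contra_notN fv => /eqP ->; rewrite (addf0 (f_add z)).
Qed.

Lemma form_dual_nonzero z (u : V z) : u != 0 -> exists w, b z w u = 1.
Proof. exact: form_dual (b_lin z) (b_sym z) (b_nondeg z) u. Qed.

(* The power of f_(z+1) that alpha_s applies to row k of T_(z+1), rows counted from 0. *)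
Definition shift_exp z (s : Sz z) (k : nat) : 'F_(p z) :=
  if (k < (r z).-1)%N then rcoef s k + rcoef s (r z).-1 else rcoef s (r z).-1.

Lemma shift_expD z (s s' : Sz z) k : shift_exp (s + s') k = shift_exp s k + shift_exp s' k.
Proof. by rewrite /shift_exp !rcoefD; case: ifP => _ //; rewrite addrACA. Qed.

Lemma shift_exp_neq0 z (s : Sz z) : s != 0 -> exists2 k, (k < r z)%N & shift_exp s k != 0.
Proof.
move=> s_neq0; have [i si] : exists i, s 0 i != 0.
  apply/existsP; apply: contraNT s_neq0 => /existsPn s0.
  by apply/eqP/rowP => i; rewrite mxE; apply/eqP/negPn/s0.
have last_lt : ((r z).-1 < r z)%N by rewrite prednK.
have [last0|last_neq0] := eqVneq (rcoef s (r z).-1) 0.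
  have i_lt : (i < (r z).-1)%N.
    rewrite ltn_neqAle -ltnS prednK // ltn_ord andbT.
    by apply: contraNneq si => ei; rewrite -rcoef_ord ei last0.
  by exists i => //; rewrite /shift_exp i_lt last0 addr0 rcoef_ord.
by exists (r z).-1 => //; rewrite /shift_exp ltnn.
Qed.

Lemma row_fshift z (s : Sz (ord_pred z)) (t : Tz z) (j : 'I_(m z)) :
  row j (fsh z s t) = iter (shift_exp s j) (f z) (row j t).
Proof. by rewrite /fshift rowK. Qed.

Lemma fshiftD z s : {morph fsh z s : t t' / t + t'}.
Proof.
move=> t t'; apply/row_matrixP => j.
by rewrite linearD /= !row_fshift linearD /= (iter_morph_add (f_add z)).
Qed.

Lemma fshift0 z s : fsh z s 0 = 0.
Proof. exact: addf0 (fshiftD s). Qed.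

Lemma fshiftN z s (t : Tz z) : fsh z s (- t) = - fsh z s t.
Proof. exact: addfN (fshiftD s) t. Qed.

Lemma fshift0s z (t : Tz z) : fsh z 0 t = t.
Proof. by apply/row_matrixP => j; rewrite row_fshift /shift_exp !rcoef0 addr0; case: ifP. Qed.

Lemma bprimeDl z v : {morph bp z ^~ v : u u' / u + u'}.
Proof.
move=> u u'; apply/rowP => i; rewrite !mxE; case: ifP => _.
  by rewrite mrowD (formDl (b_lin z)).
by rewrite -big_split; apply: eq_bigr => j _; rewrite linearD (formDl (b_lin z)).
Qed.

Lemma bprimeC z (u v : Tz z) : bp z u v = bp z v u.
Proof.
apply/rowP => i; rewrite !mxE; case: ifP => _; first by rewrite b_sym.
by apply: eq_bigr => j _; rewrite b_sym.
Qed.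

Lemma bprime0l z (v : Tz z) : bp z 0 v = 0.
Proof. exact: addf0 (bprimeDl v). Qed.

Lemma bprime0r z (u : Tz z) : bp z u 0 = 0.
Proof. by rewrite bprimeC bprime0l. Qed.

Lemma bprimeNl z (u v : Tz z) : bp z (- u) v = - bp z u v.
Proof. exact: addfN (bprimeDl v) u. Qed.

Lemma bprimeNr z (u v : Tz z) : bp z u (- v) = - bp z u v.
Proof. by rewrite bprimeC bprimeNl bprimeC. Qed.

Lemma rcoef_bprime z (u v : Tz z) i : (i < (r z).-1)%N ->
  rcoef (bp z u v) i = b z (mrow u i) (mrow v i).
Proof.
move=> i_lt; have i_lt' : (i < r z)%N by rewrite (leq_trans i_lt) ?leq_pred.
by rewrite -[i]/(val (Ordinal i_lt')) rcoef_ord mxE i_lt.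
Qed.

Lemma rcoef_bprime_last z (u v : Tz z) :
  rcoef (bp z u v) (r z).-1 = \sum_(j < m z) b z (row j u) (row j v).
Proof.
have last_lt : ((r z).-1 < r z)%N by rewrite prednK.
by rewrite -[(r z).-1]/(val (Ordinal last_lt)) rcoef_ord mxE ltnn.
Qed.

Lemma sum_row_single z (k0 : 'I_(m z)) (w : V z) (Y : Tz z) :
  \sum_(j < m z) b z (row j (row_single k0 w)) (row j Y) = b z w (row k0 Y).
Proof.
rewrite (bigD1 k0) //= big1 => [|k k_neq]; first by rewrite row_row_single eqxx addr0.
by rewrite row_row_single (negbTE k_neq) b0l.
Qed.

(* Rows below r_z - 1 produce the first coordinates; row r_z - 1 corrects the last one. *)
Lemma bprime_surjective z (sg : Sz z) : exists X Y : Tz z, bp z X Y = sg.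
Proof.
have [u u_neq0] := vector_nonzero z; have [w bwu] := form_dual_nonzero u_neq0.
pose Y : Tz z := \matrix_k u.
pose X1 : Tz z := \matrix_k ((if (k < (r z).-1)%N then rcoef sg k else 0) *: w).
pose c := rcoef sg (r z).-1 - \sum_(j < m z) b z (row j X1) (row j Y).
pose X2 : Tz z := row_single (Ordinal (r_last_lt_m z)) (c *: w).
exists (X1 + X2), Y; apply/rowP => i; rewrite bprimeDl -rcoef_ord -[sg 0 i]rcoef_ord.
case: (ltnP i (r z).-1) => i_lt.
  have i_lt' : (i < m z)%N := leq_trans i_lt (ltnW (r_last_lt_m z)).
  rewrite rcoefD !rcoef_bprime // mrow_row_single ?b0l ?addr0; last first.
    by apply: contraTneq i_lt => ->; rewrite ltnn.
  rewrite -[val i]/(val (Ordinal i_lt')) !mrow_ord !rowK i_lt.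
  by rewrite (formZl (b_lin z)) bwu mulr1.
have -> : nat_of_ord i = (r z).-1 by move: (ltn_ord i) i_lt; lia.
rewrite rcoefD !rcoef_bprime_last sum_row_single rowK (formZl (b_lin z)) bwu mulr1.
by rewrite /c addrC subrK.
Qed.

Section Ideal.
Variable L : B -> Prop.
Hypothesis L_ideal : brace_ideal add zero mul zero L.

Lemma ideal_ext x y :
  L x -> (forall z, x.1 z = y.1 z) -> (forall z, x.2 z = y.2 z) -> L y.
Proof. by move=> Lx e1 e2; rewrite -(asym_ext e1 e2). Qed.

Lemma ideal0 : L zero.
Proof. by case: L_ideal => [[[]]]. Qed.

Lemma idealD x y : L x -> L y -> L (add x y).
Proof. by case: L_ideal => [[[_ LD _] _] _]; apply: LD. Qed.

Lemma idealN t s : L (t, s) -> L (fun z => - t z, fun z => - s z + bp z (t z) (t z)).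
Proof.
case: L_ideal => [[[_ _ LN] _] _] Lts; apply: LN Lts _.
apply: asym_ext => z /=; first by rewrite addrN.
by rewrite bprimeNr addrA addrN add0r addrN.
Qed.

(* lambda_(-x, 0) (t, s) = (t, s + b'(x, t)) *)
Lemma ideal_bprime t s x : L (t, s) -> L (tzero, fun z => bp z (x z) (t z)).
Proof.
move=> Lts; have Llam : L (t, fun z => s z + bp z (x z) (t z)).
  case: L_ideal => [[_ Llam] _]; apply: Llam (fun z => - x z, szero) _ _ Lts _.
  apply: asym_ext => z /=; rewrite ?fshift0s //.
  by rewrite bprimeNl !add0r -addrA addrN addr0.
apply: ideal_ext (idealD Llam (idealN Lts)) _ _ => z /=; first by rewrite addrN.
rewrite bprimeNr; apply/rowP => i; rewrite !mxE; ring.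
Qed.

(* (x, 0) (t, s) (-x, 0) - (t, s) is (x - alpha_s(x), 0) up to a b'-term. *)
Lemma ideal_sub_fshift t s x :
  L (t, s) -> L (fun z => x z - fsh z (s (ord_pred z)) (x z), szero).
Proof.
move=> Lts; have Lconj : L (mul (mul (x, szero) (t, s)) (fun z => - x z, szero)).
  case: L_ideal => [_ [_ _ _ Lconj]]; apply: Lconj Lts.
  by apply: asym_ext => z /=; rewrite ?addr0 // fshift0s addrN.
pose y z := x z - fsh z (s (ord_pred z)) (x z).
apply: ideal_ext (idealD (idealD Lconj (idealN Lts)) (ideal_bprime y Lts)) _ _ => z /=.
  rewrite fshift0s add0r fshiftN addr0.
  by apply/matrixP => i j; rewrite !mxE; ring.
rewrite fshift0s !add0r fshiftN addr0 bprime0r bprimeNr /y !bprimeDl !bprimeNl.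
by apply/rowP => i; rewrite !mxE; ring.
Qed.

Lemma ideal_bprime_single z (X : Tz z) t s : L (t, s) -> L (tzero, ssingle (bp z X (t z))).
Proof.
move=> Lts; apply: ideal_ext (ideal_bprime (tsingle X) Lts) _ _ => //= z'.
by case: dfwithP => [|z'' z_neq]; rewrite ?dfwith_in ?dfwith_out ?bprime0l.
Qed.

Lemma ideal_row_of_shift t s w : L (t, s) -> s (ord_pred w) != 0 ->
  exists t' (j : 'I_(m w)), L (t', szero) /\ row j (t' w) != 0.
Proof.
move=> Lts s_neq0; have [k k_lt e_neq0] := shift_exp_neq0 s_neq0.
have k_lt' : (k < m w)%N := leq_trans k_lt (r_pred_le_m w).
have e_bounds : (0 < shift_exp (s (ord_pred w)) k < p (ord_pred w))%N.
  rewrite lt0n; apply/andP; split; first by apply: contra e_neq0 => /eqP e0; apply/eqP/val_inj.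
  by move: (ltn_ord (shift_exp (s (ord_pred w)) k)) (Fp_cast (p_prime (ord_pred w))); lia.
have [_ [_ /(_ _ e_bounds) [v moved]]] := f_order w.
exists (fun z => tsingle (row_single (Ordinal k_lt') v) z
              - fsh z (s (ord_pred z)) (tsingle (row_single (Ordinal k_lt') v) z)).
exists (Ordinal k_lt'); split; first exact: ideal_sub_fshift _ Lts.
rewrite dfwith_in linearB /= row_fshift !row_row_single eqxx subr_eq0.
by apply/eqP => e; apply: moved; rewrite -e.
Qed.

Lemma ideal_row_dual t s z (j : 'I_(m z)) : L (t, s) -> row j (t z) != 0 ->
  exists2 sg : Sz z, L (tzero, ssingle sg) &
    forall k : nat, ((r z).-1 <= k)%N || (k != j) -> shift_exp sg k = 1.
Proof.
move=> Lts row_neq0; have [w bw] := form_dual_nonzero row_neq0.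
exists (bp z (row_single j w) (t z)); first exact: ideal_bprime_single _ Lts.
have last1 : rcoef (bp z (row_single j w) (t z)) (r z).-1 = 1.
  by rewrite rcoef_bprime_last sum_row_single.
move=> k; rewrite /shift_exp last1; case: ltnP => //= k_lt k_neq.
by rewrite rcoef_bprime // mrow_row_single // b0l add0r.
Qed.

Hypothesis subid_bij : forall z, bijective (fun u => f z u - u).

(* With g the inverse of f - id, x := g(-M) rowwise satisfies x - alpha_sg(x) = M. *)
Lemma ideal_tsingle_of_exp1 z w (sg : Sz z) (M : Tz w) : ord_pred w = z ->
  L (tzero, ssingle sg) -> (forall k : 'I_(m w), row k M != 0 -> shift_exp sg k = 1) ->
  L (tsingle M, szero).
Proof.
move=> wz; subst z => Lsg M_exp; have [g gK Kg] := subid_bij w.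
have g0 : g 0 = 0 by have := gK 0; rewrite (addf0 (f_add w)) subr0.
pose X : Tz w := \matrix_k g (- row k M).
apply: ideal_ext (ideal_sub_fshift (tsingle X) Lsg) _ _ => //= z.
case: dfwithP => [|z' w_neq]; last by rewrite [RHS]dfwith_out // fshift0 subr0.
rewrite !dfwith_in; apply/row_matrixP => k; rewrite linearB /= row_fshift rowK.
have [->|row_neq0] := eqVneq (row k M) 0.
  by rewrite oppr0 g0 (addf0 (iter_morph_add (f_add w) _)) subr0.
by rewrite M_exp // -opprB [LHS]/= Kg opprK.
Qed.

Lemma ideal_full_succ w (k0 : 'I_(m w)) : ((r w).-1 <= k0)%N ->
  (forall v, L (tsingle (row_single k0 v), szero)) ->
  forall M : Tz (ordS w), L (tsingle M, szero).
Proof.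
move=> k0_ge Lrow M; have [v v_neq0] := vector_nonzero w.
have [w' bw'] := form_dual_nonzero v_neq0.
pose sg := bp w (row_single k0 w') (row_single k0 v).
apply: (@ideal_tsingle_of_exp1 w _ sg _ (ordSK w)) => [|k _].
  by have := ideal_bprime_single (row_single k0 w') (Lrow v); rewrite dfwith_in.
have last1 : rcoef sg (r w).-1 = 1.
  by rewrite rcoef_bprime_last sum_row_single row_row_single eqxx.
rewrite /shift_exp last1; case: ifP => // k_lt.
rewrite rcoef_bprime // mrow_row_single ?b0l ?add0r //.
by apply: contraTneq k_lt => ->; rewrite -leqNgt.
Qed.

Lemma ideal_full_all z0 : (forall M : Tz z0, L (tsingle M, szero)) ->
  forall w (M : Tz w), L (tsingle M, szero).
Proof.
move=> Lz0; apply: (@ordS_ind n (fun w => forall M : Tz w, L (tsingle M, szero)) z0 Lz0).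
by move=> w Lw; apply: (@ideal_full_succ w (Ordinal (r_last_lt_m w))) => //= v.
Qed.

Lemma ideal_total : (forall w (M : Tz w), L (tsingle M, szero)) -> forall x, L x.
Proof.
move=> Lt [t s].
have Ls w (sg : Sz w) : L (tzero, ssingle sg).
  have [X [Y <-]] := bprime_surjective sg.
  by have := ideal_bprime_single X (Lt w Y); rewrite dfwith_in.
have Lz z : L (tsingle (t z), ssingle (s z)).
  apply: ideal_ext (idealD (Lt z (t z)) (Ls z (s z))) _ _ => z' /=; first by rewrite addr0.
  by rewrite add0r bprime0r addr0.
pose restr (A : seq 'I_n) : B :=
  (fun z => if z \in A then t z else 0, fun z => if z \in A then s z else 0).
suff Lrestr A : uniq A -> L (restr A).
  by apply: ideal_ext (Lrestr _ (enum_uniq 'I_n)) _ _ => z; rewrite /= mem_enum.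
elim: A => [_|a A IH /= /andP [a_notin A_uniq]]; first exact: ideal_ext ideal0 _ _.
apply: ideal_ext (idealD (IH A_uniq) (Lz a)) _ _ => z /=; rewrite in_cons;
  have [->|z_neq] := eqVneq z a; rewrite /= ?(negbTE a_notin) ?dfwith_in ?dfwith_out 1?eq_sym //.
- exact: add0r.
- exact: addr0.
- by rewrite bprime0l addr0 add0r.
- by rewrite bprime0r !addr0.
Qed.

End Ideal.

Lemma asym_const1_neq0 (z0 : 'I_n) : (tzero, fun z => const_mx 1 : Sz z) <> zero :> B.
Proof.
move=> /(congr1 (fun x : B => x.2 z0 0 (Ordinal (r_gt0 z0)))).
by rewrite /= !mxE => /eqP; rewrite oner_eq0.
Qed.

Lemma ideal_nonzero_row L : brace_ideal add zero mul zero L -> forall x, L x -> x <> zero ->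
  exists z (j : 'I_(m z)) t s, L (t, s) /\ row j (t z) != 0.
Proof.
move=> L_ideal [t s] Lx x_neq0.
have [/existsP [z /existsP [j row_neq0]]|/existsPn t0] :=
  boolP [exists z, [exists j : 'I_(m z), row j (t z) != 0]].
  by exists z, j, t, s.
have [/existsP [z s_neq0]|/existsPn s0] := boolP [exists z, s z != 0].
  have s_neq0' : s (ord_pred (ordS z)) != 0 by rewrite ordSK.
  have [t' [j [Lt' row_neq0]]] := ideal_row_of_shift L_ideal Lx s_neq0'.
  by exists (ordS z), j, t', szero.
case: x_neq0; apply: asym_ext => z /=; last by apply/eqP; have := s0 z; rewrite negbK.
apply/row_matrixP => j; rewrite linear0; apply/eqP.
by have /existsPn/(_ j) := t0 z; rewrite negbK.
Qed.

Lemma exists_free_row w (j : nat) : exists k0 : 'I_(m w),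
  ((r w).-1 <= k0)%N && (((r (ord_pred w)).-1 <= k0)%N || (k0 != j :> nat)).
Proof.
have [/andP [/eqP rj j_lt]|not_rj] := boolP (((r w).-1 == j) && (j < (r (ord_pred w)).-1)%N).
  have r_lt : (r w < m w)%N by move: (r_gt0 w) (r_pred_le_m w) rj j_lt; lia.
  by exists (Ordinal r_lt); move: (r_gt0 w) rj; rewrite /=; lia.
by exists (Ordinal (r_last_lt_m w)); move: not_rj; rewrite /=; lia.
Qed.

Lemma simple_of_subid_bij (z0 : 'I_n) :
  (forall z, bijective (fun u => f z u - u)) -> simple_brace add zero mul zero.
Proof.
move=> subid_bij; split; first by exists (tzero, fun z => const_mx 1); exact: asym_const1_neq0 z0.
move=> L L_ideal; have [[x [Lx x_neq0]]|L0] := classic (exists x, L x /\ x <> zero); last first.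
  left=> x; split=> [Lx|->]; last exact: ideal0 L_ideal.
  by apply: NNPP => x_neq0; apply: L0; exists x.
right; have [z [j [t [s [Lts row_neq0]]]]] := ideal_nonzero_row L_ideal Lx x_neq0.
have [sg Lsg sg_exp] := ideal_row_dual L_ideal Lts row_neq0.
have [k0 /andP [k0_ge k0_free]] := exists_free_row (ordS z) j.
rewrite ordSK in k0_free.
have Lrow v : L (tsingle (row_single k0 v), szero).
  apply: (ideal_tsingle_of_exp1 L_ideal subid_bij (ordSK z) Lsg) => k.
  rewrite row_row_single; have [-> _|_] := eqVneq k k0; last by rewrite eqxx.
  exact: sg_exp k0_free.
apply: (ideal_total L_ideal); apply: (ideal_full_all L_ideal subid_bij (z0 := ordS (ordS z))).
exact: (ideal_full_succ L_ideal subid_bij k0_ge Lrow).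
Qed.

Definition subid_ideal z0 (x : B) : Prop :=
  forall j : 'I_(m z0), range_subid (f z0) (row j (x.1 z0)).

Lemma subid_ideal_ideal z0 : brace_ideal add zero mul zero (subid_ideal z0).
Proof.
have R0 := range_subid0 (f_add z0); have RD := range_subidD (f_add z0).
have RN := range_subidN (f_add z0); have Riter := range_subid_iter (f_add z0).
have I0 : subid_ideal z0 zero by move=> j; rewrite linear0.
split; split.
- split=> // [x y Ix Iy j | x y Ix /(congr1 (fun q : B => q.1 z0)) /= /addr0_eq xy j].
    by rewrite /= linearD; apply: RD (Ix j) (Iy j).
  by rewrite -xy linearN; apply: RN (Ix j).
- move=> c x y Ix /(congr1 (fun q : B => q.1 z0)) /= /addrI cxy j.
  by rewrite cxy row_fshift; apply: Riter (Ix j).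
- exact: I0.
- move=> x y Ix Iy j; rewrite linearD /= row_fshift.
  by apply: RD (Ix j) (Riter _ _ (Iy j)).
- move=> x y Ix /(congr1 (fun q : B => q.1 z0)) /= /addr0_eq xy j.
  apply: (range_subid_iterV (f_add z0) (f_order z0) (k := shift_exp (x.2 (ord_pred z0)) j)).
  by rewrite -row_fshift -xy linearN; apply: RN (Ix j).
- move=> c c' x /(congr1 (fun q : B => q.1 z0)) /= cc' Ix j.
  rewrite !linearD /= !row_fshift shift_expD [X in iter (nat_of_ord X) _ (row j (c'.1 z0))]addrC.
  rewrite (iter_order_Fp_add (f_order z0) _ _ _ (p_prime _)).
  set e := shift_exp (c.2 (ord_pred z0)) j.
  set W := iter e (f z0) (row j (c'.1 z0)).
  have -> : row j (c.1 z0) = - W.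
    by rewrite /W -row_fshift -linearN -(addr0_eq cc') opprK.
  have -> : - W + iter e (f z0) (row j (x.1 z0)) + iter (shift_exp (x.2 (ord_pred z0)) j) (f z0) W
      = iter e (f z0) (row j (x.1 z0)) + (iter (shift_exp (x.2 (ord_pred z0)) j) (f z0) W - W).
    by rewrite addrC addrA addrC.
  by apply: RD (Riter _ _ (Ix j)) (range_subid_iter_sub (f_add z0) _ _).
Qed.

Lemma subid_bij_of_simple :
  simple_brace add zero mul zero -> forall z, bijective (fun u => f z u - u).
Proof.
move=> [_ simple] z; apply: surj_bij => v.
have [I0|Iall] := simple _ (subid_ideal_ideal z).
  case: (asym_const1_neq0 z); apply/I0 => j; rewrite linear0.
  exact: range_subid0 (f_add z).
have m_gt0 : (0 < m z)%N := leq_ltn_trans (leq0n _) (r_last_lt_m z).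
have [u fu] := Iall (tsingle (\matrix_(k < m z) v), szero) (Ordinal m_gt0).
by exists u; rewrite fu /= dfwith_in rowK.
Qed.

Lemma asym_simple_iff (z0 : 'I_n) :
  simple_brace add zero mul zero <-> forall z, bijective (fun u => f z u - u).
Proof. by split; [exact: subid_bij_of_simple | exact: simple_of_subid_bij z0]. Qed.

End AsymmetricProduct.

Theorem theorem3p3 (n : nat) (hn : (1 < n)%N)
  (p : 'I_n -> nat) (hp : forall z, prime (p z)) (hpinj : injective p)
  (r : 'I_n -> nat) (hr : forall z, (0 < r z)%N)
  (m : 'I_n -> nat) (hm : forall z, (maxn (r z) (r (ord_pred z)) <= m z)%N)
  (d : 'I_n -> nat)
  (b : forall z, 'rV['F_(p z)]_(d z) -> 'rV['F_(p z)]_(d z) -> 'F_(p z))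
  (hb_lin : forall z a u v w, b z (a *: u + v) w = a * b z u w + b z v w)
  (hb_sym : forall z u v, b z u v = b z v u)
  (hb_ns : forall z u, (forall v, b z u v = 0) -> u = 0)
  (f : forall z, 'rV['F_(p z)]_(d z) -> 'rV['F_(p z)]_(d z))
  (hf_add : forall z u v, f z (u + v) = f z u + f z v)
  (hf_bij : forall z, bijective (f z))
  (hf_orth : forall z u v, b z (f z u) (f z v) = b z u v)
  (hf_ord : forall z, map_order (f z) (p (ord_pred z))) :
  simple_brace (@asym_add n p r m d b) (asym_zero p r m d)
    (@asym_mul n p r m d f) (asym_zero p r m d)
  <-> (forall z, bijective (fun u => f z u - u)).
Proof.
(* [hpinj], [hf_bij] and [hf_orth] are only needed for T x S to be a brace. *)
exact: (@asym_simple_iff n p r m d hp hr hm b hb_lin hb_sym hb_ns f hf_add hf_ord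
          (Ordinal (ltnW hn))).
Qed.
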